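(* Let $n\ge1$. Let $\lambda_i^{(n+1)}$, for $0\le i\le\binom{n+1}{2}$, be the unique integers with $$[n+1]!=\sum_{s=1}^n\left[n\atop s\right][2]^s+\lambda_0^{(n+1)}+\sum_{l=1}^{\binom{n+1}{2}}\lambda_l^{(n+1)}(q^l+q^{-l}).$$ For $i\ge0$, let $\mu_i^{(n+1)}$ be the coefficient of $q^i$ in $[n+1]!$; this is $0$ for $i>\binom{n+1}{2}$. Then: (a) For $0\le i\le n$, $$\mu_i^{(n+1)}=\lambda_i^{(n+1)}+\sum_{\substack{i\le s\le n\\ s\equiv i \bmod 2}}\left[n\atop s\right]\binom{s}{\frac{s+i}{2}}.$$ For $n+1\le i\le\binom{n+1}{2}$, $\mu_i^{(n+1)}=\lambda_i^{(n+1)}$. (b) Let $I=\lfloor\frac{n+1}{2}\rfloor$. If $I$ is odd, then for every even $i$; and if $I$ is even, then for every odd $i$: $$\lambda_i^{(n+1)}=-\sum_{\substack{i\le s\le n\\ s\equiv i\bmod 2}}\left[n\atop s\right]\binom{s}{\frac{s+i}{2}}\quad\text{if }0\le i\le n,$$ and $\lambda_i^{(n+1)}=0$ if $n+1\le i\le\binom{n+1}{2}$. (c) For all $i\ge0$, $$\mu_i^{(n+2)}=\sum_{j=0}^{n+1}\mu^{(n+1)}_{|i-(n+1)+2j|}.$$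
   Context: For an integer $k\ge1$, the quantum integer is the Laurent polynomial $$[k]=\frac{q^k-q^{-k}}{q-q^{-1}}=q^{k-1}+q^{k-3}+\cdots+q^{1-k}\in\mathbb{Z}[q,q^{-1}],$$ and $[m]!=[m][m-1]\cdots[1]$. The unsigned Stirling number of the first kind $\left[n\atop s\right]$ is the number of permutations of $\{1,\dots,n\}$ having exactly $s$ cycles in their disjoint-cycle decomposition, fixed points included. *)

From HB Require Import structures.
From mathcomp Require Import all_boot all_order all_algebra all_fingroup.
Set Implicit Arguments. Unset Strict Implicit. Unset Printing Implicit Defensive.
Import Order.TTheory GRing.Theory Num.Theory.
Local Open Scope ring_scope.

(* Laurent polynomials in q with integer coefficients, represented as a pair
   (p, a) standing for p(q) * q^(-a), with p : {poly int}.  Equality of Laurent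
   polynomials is equality of all coefficients (lcoef). *)
Definition laurent := ({poly int} * nat)%type.

Definition lcoef (L : laurent) (i : int) : int :=
  match (i + (L.2)%:Z)%R with
  | Posz k => (L.1)`_k
  | Negz _ => 0
  end.

Definition lzero : laurent := (0, 0%N).
Definition lone : laurent := (1, 0%N).
Definition ladd (L M : laurent) : laurent :=
  (L.1 * 'X^(M.2) + M.1 * 'X^(L.2), (L.2 + M.2)%N).
Definition lmul (L M : laurent) : laurent := (L.1 * M.1, (L.2 + M.2)%N).
Definition lscale (c : int) (L : laurent) : laurent := (c *: L.1, L.2).
Definition lexp (L : laurent) (s : nat) : laurent := iter s (lmul L) lone.

Definition lq (k : int) : laurent :=
  match k with
  | Posz a => ('X^a, 0%N)
  | Negz b => (1, b.+1)
  end.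

(* quantum integer [k] = q^(k-1) + q^(k-3) + ... + q^(1-k), k >= 1 *)
Definition qint (k : nat) : laurent := (\sum_(j < k) 'X^(2 * j), k.-1).

Definition qfact (m : nat) : laurent := \big[lmul/lone]_(1 <= k < m.+1) qint k.

(* unsigned Stirling number of the first kind: permutations of {1..n}
   (here 'I_n) with exactly s cycles, fixed points included *)
Definition stirling1 (n s : nat) : nat :=
  #|[set sigma : 'S_n | #|porbits sigma| == s]|.

Definition mu (m i : nat) : int := lcoef (qfact m) (Posz i).

Definition lambda_rhs (n : nat) (lam : nat -> int) : laurent :=
  ladd (\big[ladd/lzero]_(1 <= s < n.+1) lscale (stirling1 n s)%:Z (lexp (qint 2) s))
   (ladd (lscale (lam 0%N) lone)
     (\big[ladd/lzero]_(1 <= l < 'C(n.+1, 2).+1)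
        lscale (lam l) (ladd (lq (Posz l)) (lq (- Posz l))))).

From HB Require Import structures.
From mathcomp Require Import all_boot all_order all_algebra all_fingroup.
From mathcomp Require Import zify.
Import Order.TTheory GRing.Theory Num.Theory.
Local Open Scope ring_scope.

(* Everything is read off coefficientwise.  Taking the coefficient
   of q^i is additive and commutes with scalars and finite sums, so the
   coefficient of the right-hand side of the defining identity of lambda is
   computed term by term: [2]^s = (q + q^-1)^s contributes the binomial
   C(s, (s+i)/2) when s = i mod 2, the constant term contributes lambda_0 and
   q^l + q^-l contributes lambda_l at q^i for i = l >= 1.  Stirling numbers with
   s < i contribute nothing, and [n, 0] = 0, which gives (a).
   For (b) and (c) we study [m]! itself: [m+1]! = [m]! [m+1] yields a
   convolution recurrence for its coefficients, from which, by induction,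
   [m]! is symmetric under q <-> q^-1 and its coefficient of q^i vanishes
   unless i = C(m,2) mod 2; since C(n+1,2) = floor((n+1)/2)
   mod 2 this gives (b).  Part (c) is the recurrence rewritten with the
   symmetry, which replaces negative exponents by their absolute values. *)

Definition pcoefz (p : {poly int}) (z : int) : int :=
  if 0 <= z then p`_(absz z) else 0.

Lemma lcoefE (L : laurent) (i : int) : lcoef L i = pcoefz L.1 (i + (L.2)%:Z).
Proof. by rewrite /lcoef /pcoefz; case: (i + _). Qed.

Lemma pcoefzD (p r : {poly int}) (z : int) :
  pcoefz (p + r) z = pcoefz p z + pcoefz r z.
Proof. by rewrite /pcoefz; case: ifP; rewrite ?coefD ?addr0. Qed.

Lemma pcoefzZ (c : int) (p : {poly int}) (z : int) :
  pcoefz (c *: p) z = c * pcoefz p z.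
Proof. by rewrite /pcoefz; case: ifP; rewrite ?coefZ ?mulr0. Qed.

Lemma pcoefz_sum (I : Type) (r : seq I) (P : pred I) (F : I -> {poly int}) z :
  pcoefz (\sum_(i <- r | P i) F i) z = \sum_(i <- r | P i) pcoefz (F i) z.
Proof.
apply: (big_morph (pcoefz^~ z)); first by move=> p p'; apply: pcoefzD.
by rewrite /pcoefz coef0; case: ifP.
Qed.

Lemma pcoefz_mulXn (p : {poly int}) (m : nat) (z : int) :
  pcoefz (p * 'X^m) z = pcoefz p (z - m%:Z).
Proof.
rewrite /pcoefz; case: (lerP 0 z) => hz; last by case: ifP => //; lia.
rewrite coefMXn; case: ltnP => hm; first by case: ifP => //; lia.
have -> : 0 <= z - m%:Z by lia.
by congr (_`_ _); lia.
Qed.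

Lemma lcoef_add (L M : laurent) (i : int) :
  lcoef (ladd L M) i = lcoef L i + lcoef M i.
Proof.
rewrite !lcoefE pcoefzD !pcoefz_mulXn.
by congr (pcoefz _ _ + pcoefz _ _); rewrite /=; lia.
Qed.

Lemma lcoef_scale (c : int) (L : laurent) (i : int) :
  lcoef (lscale c L) i = c * lcoef L i.
Proof. by rewrite !lcoefE pcoefzZ. Qed.

Lemma lcoef_one (i : int) : lcoef lone i = (i == 0)%:R.
Proof.
rewrite lcoefE addr0 /pcoefz coef1.
by case: ifP; case: (i == 0) /eqP => //; lia.
Qed.

Lemma lcoef_big (I : Type) (r : seq I) (P : pred I) (F : I -> laurent) i :
  lcoef (\big[ladd/lzero]_(k <- r | P k) F k) i = \sum_(k <- r | P k) lcoef (F k) i.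
Proof.
apply: (big_morph (lcoef^~ i)); first by move=> L M; apply: lcoef_add.
by rewrite lcoefE /pcoefz coef0; case: ifP.
Qed.

Lemma lcoef_lq_pos (l i : nat) : lcoef (lq (Posz l)) (Posz i) = (i == l)%:R.
Proof. by rewrite lcoefE /= /pcoefz coefXn addr0. Qed.

Lemma lcoef_lq_neg (l i : nat) : (0 < l)%N -> lcoef (lq (- Posz l)) (Posz i) = 0.
Proof.
case: l => // l _; have -> : - Posz l.+1 = Negz l by [].
rewrite lcoefE /= /pcoefz coef1.
by case: (boolP (0 <= _)) => // _; case: eqP => //; lia.
Qed.

Lemma lexp_qint2 (s : nat) : lexp (qint 2) s = ((1 + 'X^2) ^+ s, s).
Proof.
elim: s => [|s IH] //.
change (lexp (qint 2) s.+1) with (lmul (qint 2) (lexp (qint 2) s)).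
by rewrite IH /lmul /= big_ord_recl big_ord1 /= expr0 add1n -exprS.
Qed.

Lemma coef_1addX2_exp (s k : nat) :
  ((1 + 'X^2 : {poly int}) ^+ s)`_k = if odd k then 0 else ('C(s, k./2))%:R.
Proof.
elim: s k => [|s IH] k.
  rewrite expr0 coef1; case: k => [|[|k]] //=.
  by case: odd => //=; rewrite bin0n.
rewrite exprS mulrDl mul1r coefD coefXnM IH.
case: k => [|[|k]] /=; rewrite ?bin0 //.
by rewrite IH subn2 /=; case: odd => //=; rewrite binS natrD addrC.
Qed.

Lemma lcoef_qint2_exp (s i : nat) : lcoef (lexp (qint 2) s) (Posz i) =
  if odd s == odd i then ('C(s, (s + i)./2))%:R else 0.
Proof.
rewrite lexp_qint2 lcoefE /pcoefz /= coef_1addX2_exp addnC oddD.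
by case: (odd s); case: (odd i).
Qed.

Lemma qfactE (m : nat) : qfact m =
  (\prod_(1 <= k < m.+1) (qint k).1, (\sum_(1 <= k < m.+1) (qint k).2)%N).
Proof.
by rewrite [qfact m]surjective_pairing; congr pair; apply: big_morph.
Qed.

Lemma qfactS (m : nat) : qfact m.+1 = lmul (qfact m) (qint m.+1).
Proof. by rewrite !qfactE /lmul /= big_nat_recr //= [in LHS](big_nat_recr m.+1). Qed.

Lemma lcoef_qfactS (m : nat) (i : int) : lcoef (qfact m.+1) i =
  \sum_(j < m.+1) lcoef (qfact m) (i + m%:Z - (2 * j)%N%:Z).
Proof.
rewrite qfactS lcoefE /lmul /= mulr_sumr pcoefz_sum; apply: eq_bigr => j _.
by rewrite pcoefz_mulXn lcoefE; congr (pcoefz _ _); lia.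
Qed.

Lemma qfact0 : qfact 0 = lone.
Proof. by rewrite /qfact big_geq. Qed.

Lemma lcoef_qfact_sym (m : nat) (i : int) :
  lcoef (qfact m) (- i) = lcoef (qfact m) i.
Proof.
elim: m i => [|m IH] i; first by rewrite qfact0 !lcoef_one oppr_eq0.
rewrite !lcoef_qfactS (reindex_inj rev_ord_inj) /=.
by apply: eq_bigr => j _; rewrite -IH; congr lcoef; have := ltn_ord j; lia.
Qed.

Lemma lcoef_qfact_abs (m : nat) (z : int) :
  lcoef (qfact m) (Posz (absz z)) = lcoef (qfact m) z.
Proof.
case: (lerP 0 z) => hz; first by congr lcoef; lia.
by rewrite -lcoef_qfact_sym; congr lcoef; lia.
Qed.

(* Parity: the coefficient of q^i in [m]! vanishes unless i = C(m,2) mod 2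
   (each factor [k] only has exponents = k-1 mod 2). *)
Lemma lcoef_qfact_parity (m : nat) (i : int) :
  odd (absz (i + 'C(m, 2)%:Z)) -> lcoef (qfact m) i = 0.
Proof.
elim: m i => [|m IH] i.
  by rewrite bin0n qfact0 lcoef_one; case: eqP => //; lia.
move=> hodd; rewrite lcoef_qfactS big1 // => j _; apply: IH.
by move: hodd; rewrite binS bin1; lia.
Qed.

(* C(m,2) = floor(m/2) mod 2, since C(m+1,2) = C(m,2) + m. *)
Lemma odd_bin2 (m : nat) : odd 'C(m, 2) = odd m./2.
Proof. by elim: m => [|m IH] //; rewrite binS bin1 oddD IH; lia. Qed.

Lemma mu_parity (m i : nat) : odd i != odd m./2 -> mu m i = 0.
Proof.
by move=> hi; apply: lcoef_qfact_parity; rewrite -odd_bin2 in hi; lia.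
Qed.

(* A permutation of a nonempty set has at least one cycle: [n, 0] = 0. *)
Lemma stirling1_n0 (n : nat) : (0 < n)%N -> stirling1 n 0 = 0%N.
Proof.
case: n => // n _; apply/eqP; rewrite cards_eq0; apply/eqP/setP => s.
rewrite !inE cards_eq0; apply/negbTE/set0Pn.
by exists (porbit s ord0); apply: imset_f.
Qed.

Definition stirling_binom_sum (n i : nat) : int :=
  \sum_(i <= s < n.+1 | odd s == odd i) (stirling1 n s)%:Z * ('C(s, (s + i)./2))%:Z.

(* The coefficient of q^i in sum_s [n, s] [2]^s: only s >= i contribute. *)
Lemma lcoef_stirling_part (n i : nat) : (0 < n)%N ->
  \sum_(1 <= s < n.+1) (stirling1 n s)%:Z * lcoef (lexp (qint 2) s) (Posz i)
  = stirling_binom_sum n i.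
Proof.
move=> n_gt0; under eq_bigr => s _ do rewrite lcoef_qint2_exp.
rewrite /stirling_binom_sum (@big_nat_widenl _ _ _ i 0) // big_mkcond /=.
rewrite [RHS]big_ltn // stirling1_n0 // mul0r if_same add0r.
apply: eq_big_nat => s _; case: (leqP i s) => hs; rewrite ?andbT ?andbF.
  by case: ifP => _; rewrite ?mulr0 // natz.
by case: ifP => hp; rewrite ?mulr0 // bin_small ?mulr0 //; lia.
Qed.

Lemma sum_nat_delta (a b i : nat) (F : nat -> int) :
  \sum_(a <= l < b) F l * (i == l)%:R = if (a <= i < b)%N then F i else 0.
Proof.
rewrite -(@big_nat1_eq _ 0 +%R) big_mkcond /=; apply: eq_bigr => l _.
by rewrite eq_sym; case: eqP => _; rewrite ?mulr1 ?mulr0.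
Qed.

Lemma lcoef_lambda_rhs (n : nat) (lam : nat -> int) (i : nat) :
  (0 < n)%N -> (i <= 'C(n.+1, 2))%N ->
  lcoef (lambda_rhs n lam) (Posz i) = stirling_binom_sum n i + lam i.
Proof.
move=> n_gt0 hi; rewrite /lambda_rhs !lcoef_add !lcoef_big lcoef_scale lcoef_one.
under eq_bigr => s _ do rewrite lcoef_scale.
rewrite lcoef_stirling_part //; congr (_ + _).
have lqE l : (1 <= l < 'C(n.+1, 2).+1)%N ->
    lcoef (lscale (lam l) (ladd (lq (Posz l)) (lq (- Posz l)))) (Posz i)
    = lam l * (i == l)%:R.
  by case/andP=> hl _; rewrite lcoef_scale lcoef_add lcoef_lq_pos lcoef_lq_neg // addr0.
rewrite (eq_big_nat _ _ lqE) sum_nat_delta {lqE}.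
by case: i hi => [|i] hi /=; rewrite ?mulr1 ?addr0 // mulr0 add0r ltnS hi.
Qed.

Theorem proposition4 (n : nat) (lam : nat -> int) :
  (0 < n)%N ->
  (forall i : int, lcoef (qfact n.+1) i = lcoef (lambda_rhs n lam) i) ->
  (* (a) *)
  ((forall i : nat, (i <= n)%N ->
      mu n.+1 i = lam i + \sum_(i <= s < n.+1 | odd s == odd i)
                             (stirling1 n s)%:Z * ('C(s, (s + i)./2))%:Z)
   /\ (forall i : nat, (n.+1 <= i <= 'C(n.+1, 2))%N -> mu n.+1 i = lam i))
  /\
  (* (b) *)
  (forall i : nat, odd i != odd (n.+1)./2 ->
     ((i <= n)%N -> lam i = - \sum_(i <= s < n.+1 | odd s == odd i)
                             (stirling1 n s)%:Z * ('C(s, (s + i)./2))%:Z)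
     /\ ((n.+1 <= i <= 'C(n.+1, 2))%N -> lam i = 0))
  /\
  (* (c) *)
  (forall i : nat,
     mu n.+2 i = \sum_(j < n.+2) mu n.+1 (absz (Posz i - Posz n.+1 + Posz (2 * j)))).
Proof.
move=> n_gt0 Hlam; rewrite -!/(stirling_binom_sum n _).
have n_le_C : (n <= 'C(n.+1, 2))%N by rewrite binS bin1 leq_addl.
have muE i : (i <= 'C(n.+1, 2))%N -> mu n.+1 i = stirling_binom_sum n i + lam i.
  by move=> hi; rewrite /mu Hlam lcoef_lambda_rhs.
have muE_large i : (n.+1 <= i <= 'C(n.+1, 2))%N -> mu n.+1 i = lam i.
  by case/andP=> h1 h2; rewrite muE // /stirling_binom_sum big_geq // add0r.
have muE_small i : (i <= n)%N -> mu n.+1 i = lam i + stirling_binom_sum n i.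
  by move=> hi; rewrite muE ?(leq_trans hi n_le_C) // addrC.
split; [by [] | split].
  move=> i /mu_parity mu0; split => hi.
    by apply/eqP; rewrite -addr_eq0 -muE_small // mu0.
  by rewrite -muE_large.
move=> i; rewrite /mu -lcoef_qfact_sym lcoef_qfactS; apply: eq_bigr => j _.
by rewrite lcoef_qfact_abs -lcoef_qfact_sym; congr lcoef; lia.
Qed.
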